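(* Let $$S(t,p,q,x,y,u,v)=\sum_{\pi}t^{|\pi|}p^{\mathrm{asc}(\pi)}q^{\mathrm{des}(\pi)}x^{\mathrm{lmax}(\pi)}y^{\mathrm{rmax}(\pi)}u^{\mathrm{lmin}(\pi)}v^{\mathrm{rmin}(\pi)},$$ the sum over all separable permutations $\pi$, and let $I(t,p,q,x,y,u,v)$ be the same sum restricted to irreducible separable permutations. Then, as formal power series, $$S(t,p,q,x,y,u,v)=xyuvt+p\,S(t,p,q,x,1,u,v)\,I(t,p,q,x,y,1,v)+q\bigl(S(t,p,q,x,y,u,1)-I(t,p,q,x,y,u,1)+xyut\bigr)S(t,p,q,1,y,u,v)$$ and $$I(t,p,q,x,y,u,v)=xyuvt+q\bigl(S(t,p,q,x,y,u,1)-I(t,p,q,x,y,u,1)+xyut\bigr)S(t,p,q,1,y,u,v).$$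
   Context: A permutation of length $n$ is a word $\pi=\pi_1\cdots\pi_n$ containing each element of $[n]$ exactly once; $|\pi|=n$. For $\pi$ of length $m$ and $\sigma$ of length $n$, $\pi\oplus\sigma=\pi_1\cdots\pi_m(\sigma_1+m)\cdots(\sigma_n+m)$ and $\pi\ominus\sigma=(\pi_1+n)\cdots(\pi_m+n)\sigma_1\cdots\sigma_n$. Separable permutations are the permutations of length $\ge1$ obtained from the permutation $1$ by repeatedly applying $\oplus$ and $\ominus$ (equivalently, those avoiding the patterns $2413$ and $3142$); the empty permutation is not separable. The permutation $1$ is irreducible; a permutation of length $n\ge2$ is irreducible if there is no $i$ with $2\le i\le n$ such that every element of $\pi_1\cdots\pi_{i-1}$ is less than every element of $\pi_i\cdots\pi_n$. Statistics: $\mathrm{asc}(\pi)=\#\{i<n:\pi_i<\pi_{i+1}\}$, $\mathrm{des}(\pi)=\#\{i<n:\pi_i>\pi_{i+1}\}$; $\pi_i$ is a left-to-right maximum (minimum) if $\pi_i>\pi_j$ ($\pi_i<\pi_j$) for all $j<i$, and a right-to-left maximum (minimum) if $\pi_i>\pi_j$ ($\pi_i<\pi_j$) for all $j>i$; $\mathrm{lmax},\mathrm{lmin},\mathrm{rmax},\mathrm{rmin}$ count these. *)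

From HB Require Import structures.
From mathcomp Require Import all_boot all_order all_algebra all_fingroup.
Set Implicit Arguments. Unset Strict Implicit. Unset Printing Implicit Defensive.
Import GRing.Theory.

(* A permutation of length n is represented by an element of {perm 'I_n};
   its one-line word is pi_1 ... pi_n (values shifted by -1, which does not
   affect any of the order-based notions below). *)
Definition word n (s : {perm 'I_n}) : seq nat := [seq val (s i) | i <- enum 'I_n].

Definition asc (w : seq nat) : nat :=
  \sum_(0 <= i < (size w).-1) (nth 0 w i < nth 0 w i.+1).
Definition des (w : seq nat) : nat :=
  \sum_(0 <= i < (size w).-1) (nth 0 w i > nth 0 w i.+1).
Definition lmax (w : seq nat) : nat :=
  \sum_(0 <= i < size w) all (fun j => nth 0 w i > nth 0 w j) (iota 0 i).
Definition lmin (w : seq nat) : nat :=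
  \sum_(0 <= i < size w) all (fun j => nth 0 w i < nth 0 w j) (iota 0 i).
Definition rmax (w : seq nat) : nat :=
  \sum_(0 <= i < size w)
     all (fun j => nth 0 w i > nth 0 w j) (iota i.+1 (size w - i.+1)).
Definition rmin (w : seq nat) : nat :=
  \sum_(0 <= i < size w)
     all (fun j => nth 0 w i < nth 0 w j) (iota i.+1 (size w - i.+1)).

Definition contains_2413 (w : seq nat) : bool :=
  [exists i : 'I_(size w), exists j : 'I_(size w), exists k : 'I_(size w),
   exists l : 'I_(size w),
   [&& i < j, j < k, k < l &
    [&& nth 0 w k < nth 0 w i, nth 0 w i < nth 0 w l & nth 0 w l < nth 0 w j]]].
Definition contains_3142 (w : seq nat) : bool :=
  [exists i : 'I_(size w), exists j : 'I_(size w), exists k : 'I_(size w),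
   exists l : 'I_(size w),
   [&& i < j, j < k, k < l &
    [&& nth 0 w j < nth 0 w l, nth 0 w l < nth 0 w i & nth 0 w i < nth 0 w k]]].

Definition separable (w : seq nat) : bool :=
  [&& 0 < size w, ~~ contains_2413 w & ~~ contains_3142 w].

Definition irreducible (w : seq nat) : bool :=
  (size w == 1) ||
  ((2 <= size w) &&
   ~~ has (fun i => all (fun a => all (fun b => a < b) (drop i w)) (take i w))
          (iota 1 (size w).-1)).

Definition weight (R : comPzRingType) (p q x y u v : R) (w : seq nat) : R :=
  p ^+ asc w * q ^+ des w * x ^+ lmax w * y ^+ rmax w * u ^+ lmin w * v ^+ rmin w.

(* coefficient of t^n in S(t,p,q,x,y,u,v) *)
Definition Scoef (R : comPzRingType) (n : nat) (p q x y u v : R) : R :=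
  \sum_(s : {perm 'I_n} | separable (word s)) weight p q x y u v (word s).

(* coefficient of t^n in I(t,p,q,x,y,u,v) *)
Definition Icoef (R : comPzRingType) (n : nat) (p q x y u v : R) : R :=
  \sum_(s : {perm 'I_n} | separable (word s) && irreducible (word s))
     weight p q x y u v (word s).

(* A separable permutation of length at least 2 has a split point, a cut such that
   every entry on one side is below every entry on the other: it is a direct sum
   a ⊕ c or a skew sum a ⊖ c, and never both, since its first entry would be both
   below and above its last one.  Cutting a sum-decomposable permutation at its last
   split point writes it uniquely as a ⊕ c with c irreducible; cutting a
   skew-decomposable one at its first split point writes it uniquely as a ⊖ c with a
   skew-indecomposable; the blocks are separable, and every such pair arises.  Across
   the cut the statistics add up, except that ⊕ adds an ascent and hides the
   right-to-left maxima of a and the left-to-right minima of c, while ⊖ adds a descent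
   and hides the right-to-left minima of a and the left-to-right maxima of c: this
   gives the factors p and q and the variables set to 1.  Finally, the separable
   skew-indecomposable permutations are the sum-decomposable ones together with the
   permutation 1, whence the factor S - I + xyut. *)

From mathcomp Require Import all_boot all_order all_algebra all_fingroup.
From mathcomp Require Import zify ring.
Set Implicit Arguments. Unset Strict Implicit. Unset Printing Implicit Defensive.
Import GRing.Theory.

Definition perm_words n : seq (seq nat) := [seq word s | s <- enum {perm 'I_n}].

Lemma nth_word n (s : {perm 'I_n}) (i : 'I_n) : nth 0 (word s) i = s i.
Proof. by rewrite /word (nth_map i) ?size_enum_ord // nth_ord_enum. Qed.

Lemma word_inj n : injective (@word n).
Proof.
move=> s1 s2 eq_s; apply/permP => i; apply: val_inj.
by have := congr1 (nth 0 ^~ i) eq_s; rewrite /= !nth_word.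
Qed.

Lemma uniq_perm_words n : uniq (perm_words n).
Proof. by rewrite map_inj_uniq ?enum_uniq //; apply: word_inj. Qed.

Lemma mem_perm_words n w : (w \in perm_words n) = perm_eq w (iota 0 n).
Proof.
apply/mapP/idP => [[s _ ->] | w_iota].
  apply: uniq_perm; rewrite ?iota_uniq //.
    by rewrite map_inj_uniq ?enum_uniq // => i j /val_inj/perm_inj.
  move=> m; rewrite mem_iota add0n /=; apply/mapP/idP => [[i _ ->] | m_lt].
    exact: ltn_ord.
  by exists (perm_inv s (Ordinal m_lt)); rewrite ?mem_enum ?permKV.
have size_w : size w = n by rewrite (perm_size w_iota) size_iota.
have w_lt i : i < n -> nth 0 w i < n.
  move=> lt_in; have : nth 0 w i \in w by rewrite mem_nth ?size_w.
  by rewrite (perm_mem w_iota) mem_iota.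
pose f (i : 'I_n) := Ordinal (w_lt i (ltn_ord i)).
have inj_f : injective f.
  move=> i j [/eqP]; rewrite nth_uniq ?size_w ?(perm_uniq w_iota) ?iota_uniq //.
  by move/eqP/val_inj.
exists (perm inj_f); rewrite ?mem_enum //.
apply: (@eq_from_nth _ 0); rewrite size_w ?size_map -?enumT ?size_enum_ord // => i lt_in.
by rewrite (nth_word _ (Ordinal lt_in)) permE.
Qed.

Lemma size_perm_word n w : w \in perm_words n -> size w = n.
Proof. by rewrite mem_perm_words => /perm_size; rewrite size_iota. Qed.

Lemma perm_word_uniq n w : w \in perm_words n -> uniq w.
Proof. by rewrite mem_perm_words => /perm_uniq->; apply: iota_uniq. Qed.

Lemma all_perm_word n w : w \in perm_words n -> all (fun i => i < n) w.
Proof. by rewrite mem_perm_words => /perm_all->; apply/allP => i; rewrite mem_iota. Qed.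

Lemma perm_words1 : perm_words 1 = [:: [:: 0]].
Proof.
have : size (perm_words 1) = 1 by rewrite size_map -cardE card_Sn.
case E: (perm_words 1) => [|w []] // _.
have : w \in perm_words 1 by rewrite E mem_head.
by rewrite mem_perm_words => /perm_small_eq ->.
Qed.

Lemma big_perm_words (R : nmodType) n (P : pred (seq nat)) (F : seq nat -> R) :
  (\sum_(s : {perm 'I_n} | P (word s)) F (word s) = \sum_(w <- perm_words n | P w) F w)%R.
Proof. by rewrite big_map big_enum_cond. Qed.

(** * Statistics relative to a direction *)

(* [ltd true] is [<] and [ltd false] is [>]: the flag lets one lemma cover ascents and
   descents, maxima and minima, the patterns 3142 and 2413, and direct and skew sums. *)
Definition ltd (b : bool) (m n : nat) : bool := if b then m < n else n < m.

Lemma ltdN b m n : ltd (~~ b) m n = ltd b n m.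
Proof. by case: b. Qed.

Lemma ltd_asym b m n : ltd b m n -> ltd b n m = false.
Proof. by case: b => /=; lia. Qed.

Lemma ltd_trans b m n k : ltd b m n -> ltd b n k -> ltd b m k.
Proof. by case: b => /=; lia. Qed.

Lemma ltd_total b m n : m != n -> ltd b m n || ltd b n m.
Proof. by case: b => /=; lia. Qed.

Lemma ltd_add2l b k m n : ltd b (k + m) (k + n) = ltd b m n.
Proof. by case: b => /=; rewrite ltn_add2l. Qed.

Lemma ltd_rel b c m n : ltd c m n -> ltd b m n = (b == c).
Proof. by case: b; case: c => /=; lia. Qed.

Fixpoint adj_path b (a : nat) (s : seq nat) : nat :=
  if s is c :: s' then ltd b a c + adj_path b c s' else 0.

Definition adj b (w : seq nat) : nat := if w is a :: s then adj_path b a s else 0.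

Fixpoint rrec b (w : seq nat) : nat :=
  if w is a :: s then all (ltd b ^~ a) s + rrec b s else 0.

Definition lrec b (w : seq nat) : nat := rrec b (rev w).

Lemma adjE b w :
  adj b w = \sum_(0 <= i < (size w).-1) ltd b (nth 0 w i) (nth 0 w i.+1).
Proof.
case: w => [|a s] /=; first by rewrite big_nil.
elim: s a => [|c s IHs] a /=; first by rewrite big_nil.
by rewrite big_nat_recl // IHs.
Qed.

Lemma rrecE b w :
  rrec b w = \sum_(0 <= i < size w) all (ltd b ^~ (nth 0 w i)) (drop i.+1 w).
Proof.
elim: w => [|a s IHs] /=; first by rewrite big_nil.
by rewrite big_nat_recl // drop0 IHs.
Qed.

Lemma lrecE b w :
  lrec b w = \sum_(0 <= i < size w) all (ltd b ^~ (nth 0 w i)) (take i w).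
Proof.
rewrite /lrec rrecE size_rev big_nat_rev add0n; apply: eq_big_nat => i /andP[_ lt_iw].
rewrite nth_rev ?drop_rev ?all_rev; last by lia.
by have -> : size w - (size w - i.+1).+1 = i by lia.
Qed.

Lemma ascE w : asc w = adj true w.   Proof. by rewrite adjE. Qed.
Lemma desE w : des w = adj false w.  Proof. by rewrite adjE. Qed.

Lemma drop_nth_iota (w : seq nat) i :
  i <= size w -> drop i w = map (nth 0 w) (iota i (size w - i)).
Proof. by move=> le_iw; rewrite map_nth_iota ?take_oversize ?size_drop //; lia. Qed.

Lemma rmaxE w : rmax w = rrec true w.
Proof.
by rewrite rrecE; apply: eq_big_nat => i /andP[_ lt_iw]; rewrite drop_nth_iota // all_map.
Qed.

Lemma rminE w : rmin w = rrec false w.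
Proof.
by rewrite rrecE; apply: eq_big_nat => i /andP[_ lt_iw]; rewrite drop_nth_iota // all_map.
Qed.

Lemma lmaxE w : lmax w = lrec true w.
Proof.
by rewrite lrecE; apply: eq_big_nat => i /andP[_ lt_iw]; rewrite -(map_nth_iota0 0) ?all_map // ltnW.
Qed.

Lemma lminE w : lmin w = lrec false w.
Proof.
by rewrite lrecE; apply: eq_big_nat => i /andP[_ lt_iw]; rewrite -(map_nth_iota0 0) ?all_map // ltnW.
Qed.

Lemma adj_path_cat b a s1 s2 :
  adj_path b a (s1 ++ s2) = adj_path b a s1 + adj_path b (last a s1) s2.
Proof. by elim: s1 a => [|c s1 IHs] a //=; rewrite IHs addnA. Qed.

Lemma adj_cat b c s1 s2 : allrel (ltd c) s1 s2 -> s1 != [::] -> s2 != [::] ->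
  adj b (s1 ++ s2) = adj b s1 + (b == c) + adj b s2.
Proof.
case: s1 => [|a s1] // + _; case: s2 => [|d s2] // /allrelP rel_s _ /=.
by rewrite adj_path_cat /= (ltd_rel b (rel_s _ _ (mem_last a s1) (mem_head d s2))) addnA.
Qed.

Lemma all_ltd_rel b c a s : s != [::] -> all (ltd c a) s -> all (ltd b ^~ a) s = (b != c).
Proof.
case: s => [|d s] // _ /allP rel_s.
have ltd_y y : y \in d :: s -> ltd b y a = (b != c).
  by move=> y_in; rewrite -ltdN (ltd_rel _ (rel_s y y_in)); case: (b); case: (c).
apply/idP/idP => [/andP[+ _] | neq_bc]; first by rewrite ltd_y ?mem_head.
by apply/allP => y y_in; rewrite ltd_y.
Qed.

Lemma rrec_cat b c s1 s2 : allrel (ltd c) s1 s2 -> s2 != [::] ->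
  rrec b (s1 ++ s2) = (if b == c then 0 else rrec b s1) + rrec b s2.
Proof.
move=> + ne_s2; elim: s1 => [|a s1 IHs] /=; first by case: eqP.
rewrite allrel_consl all_cat => /andP[rel_a /IHs ->].
by rewrite (all_ltd_rel b ne_s2 rel_a); case: eqP => _; rewrite ?andbF ?andbT addnA.
Qed.

Lemma lrec_cat b c s1 s2 : allrel (ltd c) s1 s2 -> s1 != [::] ->
  lrec b (s1 ++ s2) = lrec b s1 + (if b == c then lrec b s2 else 0).
Proof.
move=> rel_s ne_s1; rewrite /lrec rev_cat (@rrec_cat b (~~ c)).
- by rewrite addnC; case: (b); case: (c).
- by rewrite allrel_revl allrel_revr allrelC; apply: sub_allrel rel_s => m n; rewrite ltdN.
- by rewrite -size_eq0 size_rev size_eq0.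
Qed.

Lemma adj_shift b k w : adj b (map (addn k) w) = adj b w.
Proof.
case: w => [|a s] //=; elim: s a => [|c s IHs] a //=.
by rewrite ltd_add2l IHs.
Qed.

Lemma rrec_shift b k w : rrec b (map (addn k) w) = rrec b w.
Proof.
elim: w => [|a s IHs] //=; rewrite IHs all_map.
by under eq_all => m do rewrite /= ltd_add2l.
Qed.

Lemma lrec_shift b k w : lrec b (map (addn k) w) = lrec b w.
Proof. by rewrite /lrec -map_rev rrec_shift. Qed.

Section Weight.
Local Open Scope ring_scope.
Variable R : comPzRingType.
Implicit Types p q x y u v : R.

Lemma weightE p q x y u v w : weight p q x y u v w =
  p ^+ adj true w * q ^+ adj false w * x ^+ lrec true w * y ^+ rrec true w
  * u ^+ lrec false w * v ^+ rrec false w.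
Proof. by rewrite /weight ascE desE lmaxE rmaxE lminE rminE. Qed.

Lemma weight_shift p q x y u v k w :
  weight p q x y u v (map (addn k) w) = weight p q x y u v w.
Proof. by rewrite !weightE !adj_shift !lrec_shift !rrec_shift. Qed.

Lemma weight_cat_sum p q x y u v s1 s2 :
  allrel ltn s1 s2 -> s1 != [::] -> s2 != [::] ->
  weight p q x y u v (s1 ++ s2) = p * weight p q x 1 u v s1 * weight p q x y 1 v s2.
Proof.
move=> rel_s ne_s1 ne_s2; have {}rel_s : allrel (ltd true) s1 s2 by [].
rewrite !weightE !(adj_cat _ rel_s) // !(lrec_cat _ rel_s) // !(rrec_cat _ rel_s) //=.
rewrite !expr1n !exprD; ring.
Qed.

Lemma weight_cat_skew p q x y u v s1 s2 :
  allrel (ltd false) s1 s2 -> s1 != [::] -> s2 != [::] ->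
  weight p q x y u v (s1 ++ s2) = q * weight p q x y u 1 s1 * weight p q 1 y u v s2.
Proof.
move=> rel_s ne_s1 ne_s2.
rewrite !weightE !(adj_cat _ rel_s) // !(lrec_cat _ rel_s) // !(rrec_cat _ rel_s) //=.
rewrite !expr1n !exprD; ring.
Qed.

End Weight.

(** * Patterns *)

(* [pat true] is the pattern 3142 and [pat false] the pattern 2413, with the four
   values listed in the order of their positions. *)
Definition pat b (a1 a2 a3 a4 : nat) := [&& ltd b a2 a4, ltd b a4 a1 & ltd b a1 a3].

Definition has_pat b (w : seq nat) := exists i j k l,
  [/\ i < j, j < k, k < l, l < size w &
      pat b (nth 0 w i) (nth 0 w j) (nth 0 w k) (nth 0 w l)].

Definition contains b w := if b then contains_3142 w else contains_2413 w.

Lemma containsP b w : reflect (has_pat b w) (contains b w).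
Proof.
apply: (iffP idP) => [|[i [j [k [l [lt_ij lt_jk lt_kl lt_lw pat_w]]]]]].
  by case: b => /existsP[i /existsP[j /existsP[k /existsP[l]]]] /and4P[? ? ? /and3P[? ? ?]];
    exists i, j, k, l; split; rewrite /pat ?ltn_ord //; apply/and3P.
have [lt_iw lt_jw lt_kw] : [/\ i < size w, j < size w & k < size w] by split; lia.
rewrite /contains; case: b pat_w => /and3P[? ? ?]; apply/existsP; exists (Ordinal lt_iw);
  apply/existsP; exists (Ordinal lt_jw); apply/existsP; exists (Ordinal lt_kw);
  by apply/existsP; exists (Ordinal lt_lw); rewrite /= lt_ij lt_jk lt_kl /=; apply/and3P.
Qed.

Lemma separableE w :
  separable w = [&& 0 < size w, ~~ contains false w & ~~ contains true w].
Proof. by []. Qed.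

Lemma separable_gt0 w : separable w -> 0 < size w.
Proof. by case/and3P. Qed.

Lemma separable1 : separable [:: 0].
Proof.
rewrite separableE; apply/and3P; split=> //; apply/negP => /containsP;
  by move=> -[i [j [k [l [lt_ij lt_jk lt_kl /= lt_l1 _]]]]]; lia.
Qed.

Lemma has_pat_shift b k w : has_pat b (map (addn k) w) <-> has_pat b w.
Proof.
have nthE m : m < size w -> nth 0 (map (addn k) w) m = k + nth 0 w m.
  by move=> lt_mw; rewrite (nth_map 0).
rewrite /has_pat size_map; split=> -[i [j [k' [l [lt_ij lt_jk lt_kl lt_lw pat_w]]]]];
  exists i, j, k', l; split=> //; move: pat_w; rewrite /pat !nthE ?ltd_add2l //; lia.
Qed.

Lemma has_pat_catl b s1 s2 : has_pat b s1 -> has_pat b (s1 ++ s2).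
Proof.
move=> [i [j [k [l [lt_ij lt_jk lt_kl lt_lw]]]]]; exists i, j, k, l.
have [lt_i lt_j lt_k] : [/\ i < size s1, j < size s1 & k < size s1] by split; lia.
by rewrite size_cat !nth_cat lt_i lt_j lt_k lt_lw ltn_addr.
Qed.

Lemma has_pat_catr b s1 s2 : has_pat b s2 -> has_pat b (s1 ++ s2).
Proof.
move=> [i [j [k [l [lt_ij lt_jk lt_kl lt_lw]]]]].
exists (size s1 + i), (size s1 + j), (size s1 + k), (size s1 + l).
rewrite size_cat !nth_cat !ltnNge !leq_addr /= !addKn; split=> //; lia.
Qed.

Lemma pat_straddle b c a1 a2 a3 a4 :
  pat b a1 a2 a3 a4 -> ltd c a1 a4 -> ltd c a1 a3 || ltd c a2 a4 -> False.
Proof. by rewrite /pat; case: b; case: c => /=; lia. Qed.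

Lemma has_pat_cat b c s1 s2 : allrel (ltd c) s1 s2 ->
  has_pat b (s1 ++ s2) <-> has_pat b s1 \/ has_pat b s2.
Proof.
move=> /allrelP rel_s; split=> [|[/has_pat_catl | /has_pat_catr]] //.
move=> [i [j [k [l [lt_ij lt_jk lt_kl + pat_w]]]]]; rewrite size_cat => lt_l.
have [lt_l1 | le_1l] := ltnP l (size s1).
  have [lt_i lt_j lt_k] : [/\ i < size s1, j < size s1 & k < size s1] by split; lia.
  by left; exists i, j, k, l; move: pat_w; rewrite !nth_cat lt_i lt_j lt_k lt_l1.
have [le_1i | lt_i1] := leqP (size s1) i.
  right; exists (i - size s1), (j - size s1), (k - size s1), (l - size s1).
  have [le_j le_k] : size s1 <= j /\ size s1 <= k by split; lia.
  by move: pat_w; rewrite !nth_cat !ltnNge le_1i le_j le_k le_1l /=; split=> //; lia.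
have rel_w m m' : m < size s1 <= m' -> m' < size s1 + size s2 ->
    ltd c (nth 0 (s1 ++ s2) m) (nth 0 (s1 ++ s2) m').
  move=> /andP[lt_m le_m'] lt_m'; rewrite !nth_cat lt_m ltnNge le_m' /=.
  by apply: rel_s; apply: mem_nth; rewrite // -(ltn_add2l (size s1)) subnKC.
exfalso; apply: (pat_straddle pat_w); first by apply: rel_w; lia.
have [lt_k1 | le_1k] := ltnP k (size s1); last by rewrite rel_w //; lia.
by rewrite orbC rel_w //; lia.
Qed.

Lemma contains_shift b k w : contains b (map (addn k) w) = contains b w.
Proof. by apply/containsP/containsP => /has_pat_shift. Qed.

Lemma contains_cat b c s1 s2 : allrel (ltd c) s1 s2 ->
  contains b (s1 ++ s2) = contains b s1 || contains b s2.
Proof.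
move=> rel_s; apply/containsP/orP; rewrite (has_pat_cat _ rel_s).
all: by case=> /containsP; auto.
Qed.

Lemma separable_shift k w : separable (map (addn k) w) = separable w.
Proof. by rewrite !separableE !contains_shift size_map. Qed.

Lemma separable_cat c s1 s2 : allrel (ltd c) s1 s2 -> s1 != [::] -> s2 != [::] ->
  separable (s1 ++ s2) = separable s1 && separable s2.
Proof.
move=> rel_s; rewrite -!size_eq0 -!lt0n => ne_s1 ne_s2.
rewrite !separableE !(contains_cat _ rel_s) size_cat ltn_addr ne_s1 ?ne_s2 //=.
by rewrite !negb_or andbACA.
Qed.

Lemma has_pat_cat4 b (t1 t2 t3 t4 : seq nat) a1 a2 a3 a4 :
  a1 \in t1 -> a2 \in t2 -> a3 \in t3 -> a4 \in t4 -> pat b a1 a2 a3 a4 ->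
  has_pat b (t1 ++ t2 ++ t3 ++ t4).
Proof.
move=> a1_in a2_in a3_in a4_in pat_a.
move: (a1_in) (a2_in) (a3_in) (a4_in); rewrite -!index_mem => lt1 lt2 lt3 lt4.
have nthD (s s' : seq nat) i : nth 0 (s ++ s') (size s + i) = nth 0 s' i.
  by rewrite nth_cat ltnNge leq_addr addKn.
exists (index a1 t1), (size t1 + index a2 t2), (size t1 + (size t2 + index a3 t3)),
  (size t1 + (size t2 + (size t3 + index a4 t4))).
rewrite !size_cat !nthD nth_cat lt1 (nth_cat _ t2) lt2 (nth_cat _ t3) lt3 !nth_index //.
split=> //; rewrite ?ltn_add2l ?ltn_addr //.
Qed.

(** * Split points *)

Definition splits b (w : seq nat) i := allrel (ltd b) (take i w) (drop i w).

Definition decomposable b (w : seq nat) := has (splits b w) (iota 1 (size w).-1).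

Lemma decomposableP b w :
  reflect (exists2 i, 0 < i < size w & splits b w i) (decomposable b w).
Proof.
apply: (iffP hasP) => -[i]; rewrite ?mem_iota => lt_i split_i; exists i;
  rewrite ?mem_iota //; lia.
Qed.

Lemma irreducibleE w : 0 < size w -> irreducible w = ~~ decomposable true w.
Proof. by rewrite /irreducible; case: w => [|a [|c s]]. Qed.

Lemma dropl_cat (s1 s2 : seq nat) i : i <= size s1 -> drop i (s1 ++ s2) = drop i s1 ++ s2.
Proof.
rewrite drop_cat leq_eqVlt => /orP[/eqP-> | ->] //.
by rewrite ltnn subnn drop0 drop_size.
Qed.

Lemma splits_size_cat b s1 s2 : splits b (s1 ++ s2) (size s1) = allrel (ltd b) s1 s2.
Proof. by rewrite /splits take_size_cat ?drop_size_cat. Qed.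

Lemma splits_catl b s1 s2 i : allrel (ltd b) s1 s2 -> i <= size s1 ->
  splits b (s1 ++ s2) i = splits b s1 i.
Proof.
move=> /allrelP rel_s le_i; rewrite /splits takel_cat // dropl_cat // allrel_catr.
suff -> : allrel (ltd b) (take i s1) s2 by rewrite andbT.
by apply/allrelP => m n /mem_take; apply: rel_s.
Qed.

Lemma splits_catr b s1 s2 i : allrel (ltd b) s1 s2 ->
  splits b (s1 ++ s2) (size s1 + i) = splits b s2 i.
Proof.
move=> /allrelP rel_s; rewrite /splits takeD take_size_cat // addnC -drop_drop.
rewrite drop_size_cat // allrel_catl.
suff -> : allrel (ltd b) s1 (drop i s2) by [].
by apply/allrelP => m n m_in /mem_drop; apply: rel_s.
Qed.

Lemma splits_shift b k w i : splits b (map (addn k) w) i = splits b w i.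
Proof.
rewrite /splits -map_take -map_drop allrel_mapl allrel_mapr.
by apply: eq_allrel => m n; rewrite ltd_add2l.
Qed.

Lemma decomposable_shift b k w : decomposable b (map (addn k) w) = decomposable b w.
Proof. by rewrite /decomposable size_map; apply: eq_has => i; rewrite splits_shift. Qed.

Lemma decomposable_head_last b w : decomposable b w -> ltd b (head 0 w) (last 0 w).
Proof.
case/decomposableP => i /andP[i_gt0 lt_iw] /allrelP; apply.
  by case: w i_gt0 lt_iw => [|a s] //; case: i => // i _ _; apply: mem_head.
rewrite -[in last 0 w](cat_take_drop i w) last_cat.
case E: (drop i w) => [|d ds]; last exact: mem_last.
by move: (size_drop i w); rewrite E => /esym/eqP; rewrite subn_eq0 leqNgt lt_iw.
Qed.

Lemma decomposable_sum_skew w : decomposable true w -> ~~ decomposable false w.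
Proof.
move=> /decomposable_head_last lt_w; apply/negP => /decomposable_head_last.
by rewrite -[false]/(~~ true) ltdN (ltd_asym lt_w).
Qed.

Definition first_split b w k :=
  [&& 0 < k, k < size w, splits b w k & ~~ decomposable b (take k w)].

Definition last_split b w k :=
  [&& 0 < k, k < size w, splits b w k & ~~ decomposable b (drop k w)].

Lemma splits_take b w k i : splits b w k -> k <= size w -> i <= k ->
  splits b (take k w) i = splits b w i.
Proof.
move=> split_k le_kw le_ik.
by rewrite -[in RHS](cat_take_drop k w) splits_catl // size_takel.
Qed.

Lemma splits_drop b w k i : splits b w k -> k <= size w ->
  splits b (drop k w) i = splits b w (k + i).
Proof.
move=> split_k le_kw.
by rewrite -[in RHS](cat_take_drop k w) -[X in splits _ _ (X + _)](size_takel le_kw) splits_catr.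
Qed.

Lemma first_splitP b w : decomposable b w -> exists k, first_split b w k.
Proof.
move=> /decomposableP[i lt_i split_i].
pose P k := (0 < k < size w) && splits b w k.
have ex_k : exists k, P k by exists i; rewrite /P lt_i.
have [k /andP[lt_k split_k] min_k] := ex_minnP ex_k.
exists k; rewrite /first_split; move: lt_k => /andP[-> lt_k]; rewrite lt_k split_k /=.
apply/decomposableP => -[j]; rewrite size_takel ?(ltnW lt_k) // => /andP[j_gt0 lt_jk].
rewrite splits_take ?(ltnW lt_k) ?(ltnW lt_jk) // => split_j.
by have := min_k j; rewrite /P j_gt0 (ltn_trans lt_jk lt_k) split_j leqNgt lt_jk => /(_ isT).
Qed.

Lemma last_splitP b w : decomposable b w -> exists k, last_split b w k.
Proof.
move=> /decomposableP[i lt_i split_i].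
pose P k := (0 < k < size w) && splits b w k.
have ex_k : exists k, P k by exists i; rewrite /P lt_i.
have ub_k k : P k -> k <= size w by move=> /andP[/andP[_ /ltnW]].
have [k /andP[lt_k split_k] max_k] := ex_maxnP ex_k ub_k.
exists k; rewrite /last_split; move: lt_k => /andP[-> lt_k]; rewrite lt_k split_k /=.
apply/decomposableP => -[j]; rewrite size_drop => /andP[j_gt0 lt_j].
rewrite splits_drop ?(ltnW lt_k) // => split_j.
have := max_k (k + j); rewrite /P split_j addn_gt0 j_gt0 orbT -ltn_subRL lt_j.
by rewrite -{2}[k]addn0 leq_add2l leqNgt j_gt0 => /(_ isT).
Qed.

Lemma first_split_uniq b w k k' : first_split b w k -> first_split b w k' -> k = k'.
Proof.
wlog lt_kk' : k k' / k < k'.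
  move=> wlog_k split_k split_k'; case: (ltngtP k k') => [lt_kk'|lt_k'k|//].
    exact: wlog_k split_k split_k'.
  exact/esym/(wlog_k _ _ lt_k'k split_k' split_k).
move=> /and4P[k_gt0 _ split_k _] /and4P[_ lt_k'w split_k' /decomposableP[]].
have le_k'w := ltnW lt_k'w.
by exists k; rewrite ?size_takel ?splits_take // ?k_gt0 // ltnW.
Qed.

Lemma last_split_uniq b w k k' : last_split b w k -> last_split b w k' -> k = k'.
Proof.
wlog lt_kk' : k k' / k < k'.
  move=> wlog_k split_k split_k'; case: (ltngtP k k') => [lt_kk'|lt_k'k|//].
    exact: wlog_k split_k split_k'.
  exact/esym/(wlog_k _ _ lt_k'k split_k' split_k).
move=> /and4P[_ lt_kw split_k indec_k] /and4P[_ lt_k'w split_k' _].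
case/decomposableP: indec_k; exists (k' - k); first by rewrite size_drop subn_gt0 lt_kk' ltn_sub2r.
by rewrite splits_drop ?subnKC // ltnW.
Qed.

Lemma splits_rcons b s z k : splits b s k -> k <= size s ->
  all (ltd b ^~ z) (take k s) -> splits b (rcons s z) k.
Proof.
move=> split_k le_ks all_z.
by rewrite /splits -cats1 takel_cat // dropl_cat // allrel_catr allrel1r all_z andbT.
Qed.

Lemma splits_rcons_size b s z : all (ltd b z) s -> splits (~~ b) (rcons s z) (size s).
Proof.
rewrite -cats1 splits_size_cat allrel1r => all_z.
by apply/allP => a a_in; rewrite ltdN (allP all_z).
Qed.

Lemma has_pat_rcons b t1 t2 s2 z a c :
    allrel (ltd (~~ b)) t1 t2 -> allrel (ltd b) (t1 ++ t2) s2 ->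
    t1 != [::] -> t2 != [::] -> s2 != [::] ->
    a \in t1 ++ t2 -> ltd b z a -> c \in t1 ++ t2 -> ltd b c z ->
  has_pat b (rcons (t1 ++ t2 ++ s2) z).
Proof.
move=> /allrelP rel_t /allrelP rel_s.
case: t1 rel_t rel_s => [|x0 t1] // rel_t rel_s _.
case: t2 rel_t rel_s => [|y0 t2] // rel_t rel_s _.
case: s2 rel_s => [|e s2] // rel_s _.
rewrite mem_cat => a_in za; rewrite mem_cat => c_in cz.
have [x x_in zx] : exists2 x, x \in x0 :: t1 & ltd b z x.
  case/orP: a_in => a_in; first by exists a.
  by exists x0; rewrite ?mem_head // (ltd_trans za) // -ltdN rel_t ?mem_head.
have [y y_in yz] : exists2 y, y \in y0 :: t2 & ltd b y z.
  case/orP: c_in => c_in; last by exists c.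
  by exists y0; rewrite ?mem_head // (ltd_trans _ cz) // -ltdN rel_t ?mem_head.
rewrite -cats1 -!catA; apply: (has_pat_cat4 x_in y_in (mem_head e s2) (mem_head z [::])).
by rewrite /pat yz zx rel_s ?mem_cat ?x_in ?mem_head.
Qed.

Definition pattern_free w := forall b, ~ has_pat b w.

Lemma separable_pattern_free w : separable w -> pattern_free w.
Proof. by rewrite separableE => /and3P[_ /containsP free2413 /containsP free3142] []. Qed.

Lemma pattern_free_catl s1 s2 : pattern_free (s1 ++ s2) -> pattern_free s1.
Proof. by move=> free_s b /(has_pat_catl s2); apply: free_s. Qed.

(* Let [s] first split, in direction [b], into [s1] and [s2].  If all of [s1] is
   [ltd b]-below [z], then [z] joins [s2]; if [z] is [ltd b]-below all of [s], then
   [rcons s z] splits before [z].  Otherwise [s1], which has no [b]-split, splits in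
   direction [~~ b], and [z] forms the pattern [pat b] with an entry of each part of
   [s1] and the head of [s2]. *)

Lemma decomposable_rcons b s z k :
    pattern_free (rcons s z) -> z \notin s -> first_split b s k ->
    (1 < size (take k s) -> exists b', decomposable b' (take k s)) ->
  exists b', decomposable b' (rcons s z).
Proof.
move=> free_sz z_notin /and4P[k_gt0 lt_ks split_k indec_s1] IH_s1.
have le_ks := ltnW lt_ks.
have [all_z | /allPn[a a_in]] := boolP (all (ltd b ^~ z) (take k s)).
  exists b; apply/decomposableP; exists k; last exact: splits_rcons.
  by rewrite k_gt0 size_rcons ltnS.
have [all_z | /allPn[c c_in]] := boolP (all (ltd b z) s).
  exists (~~ b); apply/decomposableP; exists (size s); last exact: splits_rcons_size.
  by rewrite size_rcons ltnS leqnn (leq_trans k_gt0 le_ks).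
have neq_z d : d \in s -> d != z by move=> d_in; apply: contraNneq z_notin => <-.
move=> not_zc not_az.
have za : ltd b z a.
  by have := ltd_total b (neq_z a (mem_take a_in)); rewrite (negbTE not_az).
have cz : ltd b c z by have := ltd_total b (neq_z c c_in); rewrite (negbTE not_zc) orbF.
set s1 := take k s in a_in indec_s1 IH_s1; set s2 := drop k s in split_k.
have c_s1 : c \in s1.
  move: c_in; rewrite -(cat_take_drop k s) mem_cat => /orP[] // c_s2.
  have ac : ltd b a c by apply: (allrelP split_k).
  by move: cz; rewrite ltd_asym // (ltd_trans za ac).
have size_s1 : 1 < size s1.
  case: (s1) a_in c_s1 => [|d [|? ?]] //; rewrite !inE => /eqP ad /eqP cd.
  by move: za; rewrite ad -cd ltd_asym.
have {IH_s1} dec_s1 : decomposable (~~ b) s1.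
  by have [[] dec] := IH_s1 size_s1; case: (b) indec_s1 => //; rewrite dec.
case/decomposableP: dec_s1 => j /andP[j_gt0 lt_j] split_j.
case: (free_sz b); rewrite -(cat_take_drop k s) -/s1 -/s2 -(cat_take_drop j s1) -catA.
apply: (has_pat_rcons split_j _ _ _ _ _ za _ cz); rewrite ?cat_take_drop //.
- by rewrite -size_eq0 size_takel ?lt0n ?(ltnW lt_j) // -lt0n.
- by rewrite -size_eq0 size_drop subn_eq0 -ltnNge.
- by rewrite -size_eq0 size_drop subn_eq0 -ltnNge.
Qed.

Lemma pattern_free_decomposable w :
  uniq w -> 1 < size w -> pattern_free w -> exists b, decomposable b w.
Proof.
move: {2}(size w) (leqnn (size w)) => n; elim: n w => [|n IHn] w; first by case: w.
case/lastP: w => [// | s z]; rewrite size_rcons ltnS rcons_uniq.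
move=> le_sn /andP[z_notin uniq_s] lt1_sz free_sz.
have free_s : pattern_free s by apply: (@pattern_free_catl s [:: z]); rewrite cats1.
have [le_s1 | lt1_s] := leqP (size s) 1.
  case: s z_notin lt1_sz le_s1 {le_sn uniq_s free_sz free_s} => [|a []] // z_notin _ _.
  rewrite mem_seq1 eq_sym in z_notin.
  have /orP[az | za] := ltd_total true z_notin;
    [exists true | exists false]; apply/decomposableP; exists 1 => //;
    by rewrite /splits /= allrel1l all_seq1.
have [b dec_s] := IHn s le_sn uniq_s lt1_s free_s.
have [k first_k] := first_splitP dec_s.
apply: (decomposable_rcons free_sz z_notin first_k) => lt1_s1.
apply: IHn; rewrite ?take_uniq //; last first.
  by apply: (@pattern_free_catl _ (drop k s)); rewrite cat_take_drop.
by rewrite size_take_min geq_min le_sn orbT.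
Qed.

(** * Direct and skew sums *)

Lemma perm_iota_cat s1 s2 n : perm_eq (s1 ++ s2) (iota 0 n) -> allrel ltn s1 s2 ->
  perm_eq s1 (iota 0 (size s1)) /\ perm_eq s2 (iota (size s1) (size s2)).
Proof.
move=> perm_s rel_s.
(* sorting each block must give the sorted list [iota 0 n] *)
have sorted_cat : sort leq s1 ++ sort leq s2 = iota 0 (size s1 + size s2).
  have -> : size s1 + size s2 = n by rewrite -size_cat (perm_size perm_s) size_iota.
  apply: (sorted_eq leq_trans anti_leq); rewrite ?iota_sorted //; last first.
    by rewrite (perm_trans _ perm_s) // perm_cat ?perm_sort.
  rewrite sorted_pairwise ?pairwise_cat -?sorted_pairwise ?(sort_sorted leq_total) //;
    try exact: leq_trans.
  rewrite (eq_allrel_mem2 _ (mem_sort _ _) (mem_sort _ _)) !andbT.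
  exact: (sub_allrel (fun m n => @ltnW m n) rel_s).
rewrite iotaD add0n in sorted_cat.
move/eqP: sorted_cat; rewrite eqseq_cat ?size_sort ?size_iota // => /andP[/eqP s1E /eqP s2E].
by rewrite -s1E -s2E; split; rewrite perm_sym perm_sort.
Qed.

Lemma perm_words_shift s m l :
  perm_eq (map (addn m) s) (iota m l) = (s \in perm_words l).
Proof.
rewrite mem_perm_words -[m in iota m]addn0 iotaDl.
by apply/idP/idP => [/(perm_map_inj (@addnI m)) | /(perm_map (addn m))].
Qed.

Lemma perm_iota_shift s m l : perm_eq s (iota m l) ->
  exists2 s0, s0 \in perm_words l & s = map (addn m) s0.
Proof.
move=> perm_s; have shiftK : map (addn m) (map (subn^~ m) s) = s.
  rewrite -map_comp -[RHS]map_id; apply/eq_in_map => x.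
  by rewrite (perm_mem perm_s) mem_iota /= => /andP[/subnKC].
by exists (map (subn^~ m) s); rewrite // -(perm_words_shift _ m) shiftK.
Qed.

(* [dsum true] is the direct sum ⊕ and [dsum false] the skew sum ⊖. *)
Definition dsum b (a c : seq nat) :=
  if b then a ++ map (addn (size a)) c else map (addn (size c)) a ++ c.

Section DirectSum.
Variables (k l : nat) (a c : seq nat).
Hypotheses (a_perm : a \in perm_words k) (c_perm : c \in perm_words l).

Let size_a : size a = k. Proof. exact: size_perm_word a_perm. Qed.
Let size_c : size c = l. Proof. exact: size_perm_word c_perm. Qed.

Lemma take_dsum b : take k (dsum b a c) = if b then a else map (addn l) a.
Proof. by case: b; rewrite /dsum take_size_cat ?size_map ?size_a ?size_c. Qed.

Lemma drop_dsum b : drop k (dsum b a c) = if b then map (addn k) c else c.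
Proof. by case: b; rewrite /dsum drop_size_cat ?size_map ?size_a ?size_c. Qed.

Lemma splits_dsum b : splits b (dsum b a c) k.
Proof.
rewrite /splits take_dsum drop_dsum; apply/allrelP; case: b => x y /=.
  by move=> /(allP (all_perm_word a_perm)) lt_xk /mapP[y0 _ ->]; rewrite ltn_addr.
by move=> /mapP[x0 _ ->] /(allP (all_perm_word c_perm)) lt_yl; rewrite ltn_addr.
Qed.

Lemma dsum_perm_words b : dsum b a c \in perm_words (k + l).
Proof.
rewrite mem_perm_words /dsum; case: b.
  by rewrite iotaD perm_cat -?mem_perm_words // size_a perm_words_shift.
by rewrite addnC iotaD perm_catC perm_cat -?mem_perm_words // size_c perm_words_shift.
Qed.

Lemma decomposable_take_dsum b b' :
  decomposable b' (take k (dsum b a c)) = decomposable b' a.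
Proof. by rewrite take_dsum; case: b; rewrite ?decomposable_shift. Qed.

Lemma decomposable_drop_dsum b b' :
  decomposable b' (drop k (dsum b a c)) = decomposable b' c.
Proof. by rewrite drop_dsum; case: b; rewrite ?decomposable_shift. Qed.

Hypotheses (k_gt0 : 0 < k) (l_gt0 : 0 < l).

Let a_neq0 : a != [::]. Proof. by rewrite -size_eq0 size_a -lt0n. Qed.
Let c_neq0 : c != [::]. Proof. by rewrite -size_eq0 size_c -lt0n. Qed.

Lemma separable_dsum b : separable (dsum b a c) = separable a && separable c.
Proof.
rewrite -(cat_take_drop k (dsum b a c)) (separable_cat (splits_dsum b)).
- by rewrite take_dsum drop_dsum; case: b; rewrite separable_shift.
- by rewrite take_dsum; case: b; rewrite // -size_eq0 size_map size_eq0.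
- by rewrite drop_dsum; case: b; rewrite // -size_eq0 size_map size_eq0.
Qed.

Section Weight.
Local Open Scope ring_scope.
Variables (R : comPzRingType) (p q x y u v : R).

Lemma weight_dsum_sum :
  weight p q x y u v (dsum true a c) = p * weight p q x 1 u v a * weight p q x y 1 v c.
Proof.
have := splits_dsum true; rewrite /splits take_dsum drop_dsum /= => rel_ac.
by rewrite /dsum weight_cat_sum ?size_a ?weight_shift // -size_eq0 size_map size_eq0.
Qed.

Lemma weight_dsum_skew :
  weight p q x y u v (dsum false a c) = q * weight p q x y u 1 a * weight p q 1 y u v c.
Proof.
have := splits_dsum false; rewrite /splits take_dsum drop_dsum /= => rel_ac.
by rewrite /dsum weight_cat_skew ?size_c ?weight_shift // -size_eq0 size_map size_eq0.
Qed.

End Weight.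

End DirectSum.

Lemma dsum_inj b a1 c1 a2 c2 : size a1 = size a2 -> size c1 = size c2 ->
  dsum b a1 c1 = dsum b a2 c2 -> a1 = a2 /\ c1 = c2.
Proof.
move=> size_a size_c; rewrite /dsum -size_a -size_c.
case: b => /eqP; rewrite eqseq_cat ?size_map // => /andP[/eqP + /eqP].
  by move=> -> /(inj_map (@addnI _)).
by move=> /(inj_map (@addnI _)) ->.
Qed.

Lemma mem_dsums b n k w : k <= n ->
  (w \in [seq dsum b a c | a <- perm_words k, c <- perm_words (n - k)])
  = (w \in perm_words n) && splits b w k.
Proof.
move=> le_kn; apply/allpairsP/andP => [[[a c] [/= a_in c_in ->]] | [w_in split_w]].
  by rewrite -[in perm_words n](subnKC le_kn) dsum_perm_words // (splits_dsum a_in c_in).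
have size_t : size (take k w) = k by rewrite size_takel // (size_perm_word w_in).
have size_d : size (drop k w) = n - k by rewrite size_drop (size_perm_word w_in).
have perm_w : perm_eq (take k w ++ drop k w) (iota 0 n) by rewrite cat_take_drop -mem_perm_words.
case: b split_w => split_w.
  have [perm_t perm_d] := perm_iota_cat perm_w split_w.
  rewrite size_t size_d in perm_t perm_d.
  have [c c_in d_eq] := perm_iota_shift perm_d.
  by exists (take k w, c); rewrite mem_perm_words /dsum size_t -d_eq cat_take_drop.
rewrite perm_catC in perm_w; move: split_w; rewrite /splits allrelC => split_w.
have [perm_d perm_t] := perm_iota_cat perm_w split_w.
rewrite size_t size_d in perm_t perm_d.
have [a a_in t_eq] := perm_iota_shift perm_t.
by exists (a, drop k w); rewrite /= a_in mem_perm_words perm_d /dsum size_d -t_eq cat_take_drop.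
Qed.

(** * Summing over decomposable permutations *)

Local Open Scope ring_scope.

Lemma big_splits (R : nmodType) b n k (Q : pred (seq nat)) (F : seq nat -> R) :
    (k <= n)%N ->
  \sum_(w <- perm_words n | splits b w k && Q w) F w
  = \sum_(a <- perm_words k) \sum_(c <- perm_words (n - k) | Q (dsum b a c)) F (dsum b a c).
Proof.
move=> le_kn.
have perm_dsums : perm_eq [seq w <- perm_words n | splits b w k]
                          [seq dsum b a c | a <- perm_words k, c <- perm_words (n - k)].
  apply: uniq_perm; rewrite ?filter_uniq ?uniq_perm_words //.
    apply: allpairs_uniq; rewrite ?uniq_perm_words // => -[a1 c1] [a2 c2].
    move=> /allpairsP[[a1' c1'] [/= a1_in c1_in [-> ->]]].
    move=> /allpairsP[[a2' c2'] [/= a2_in c2_in [-> ->]]].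
    case/dsum_inj=> [||-> ->] //; first by rewrite (size_perm_word a1_in) (size_perm_word a2_in).
    by rewrite (size_perm_word c1_in) (size_perm_word c2_in).
  by move=> w; rewrite mem_filter mem_dsums // andbC.
rewrite -big_filter_cond (perm_big _ perm_dsums) big_mkcond big_allpairs_dep.
by apply: eq_bigr => a _; rewrite [RHS]big_mkcond.
Qed.

Lemma big_unique_index (R : nmodType) (I : eqType) (s : seq I) (P : pred I)
    (C : I -> nat -> bool) n (F : I -> R) :
    {in s, forall i, P i -> exists2 k, (k < n)%N & C i k} ->
    (forall i k, C i k -> P i) -> (forall i k k', C i k -> C i k' -> k = k') ->
  \sum_(i <- s | P i) F i = \sum_(k < n) \sum_(i <- s | C i k) F i.
Proof.
move=> exP CP uniqC; under [RHS]eq_bigr do rewrite big_mkcond.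
rewrite exchange_big big_mkcond !big_seq; apply: eq_bigr => i i_in /=.
rewrite -big_mkcond; case: ifP => [Pi | notPi].
  have [k lt_kn Cik] := exP i i_in Pi.
  rewrite (big_pred1 (Ordinal lt_kn)) // => k' /=.
  by apply/idP/eqP => [/uniqC/(_ Cik) eq_k | ->]; first exact: val_inj.
by rewrite big_pred0 // => k; apply/negbTE/negP => /CP; rewrite notPi.
Qed.

Lemma separable_dsum_perm_words b k l a c :
    a \in perm_words k -> c \in perm_words l ->
  [&& 0 < k, 0 < l & separable (dsum b a c)]%N = separable a && separable c.
Proof.
move=> a_in c_in; have [k0 | k_gt0] := posnP k.
  by move: a_in; rewrite k0 => /size_perm_word/size0nil ->.
have [l0 | l_gt0] := posnP l.
  by move: c_in; rewrite l0 => /size_perm_word/size0nil ->; case: (separable a).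
exact: separable_dsum a_in c_in k_gt0 l_gt0 b.
Qed.

Lemma big_nested_cond (R : nmodType) (I J : eqType) (r1 : seq I) (r2 : seq J)
    (Q : I -> J -> bool) (A : pred I) (B : pred J) (G : I -> J -> R) :
    {in r1 & r2, forall i j, Q i j = A i && B j} ->
  \sum_(i <- r1) \sum_(j <- r2 | Q i j) G i j = \sum_(i <- r1 | A i) \sum_(j <- r2 | B j) G i j.
Proof.
move=> QE; rewrite [RHS]big_mkcond !big_seq; apply: eq_bigr => i i_in.
rewrite big_seq_cond (eq_bigl (fun j => A i && ((j \in r2) && B j))) => [|j]; last first.
  by case j_in: (j \in r2); rewrite ?andbF // QE.
by case: (A i); [rewrite [RHS]big_seq_cond | rewrite big_pred0].
Qed.

Section DecomposableSums.
Variables (R : nmodType) (F : seq nat -> R).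

Lemma big_decomposable_last b n :
  \sum_(w <- perm_words n | separable w && decomposable b w) F w
  = \sum_(k < n.+1) \sum_(a <- perm_words k | separable a)
      \sum_(c <- perm_words (n - k) | separable c && ~~ decomposable b c) F (dsum b a c).
Proof.
rewrite (big_unique_index _ (n := n.+1) (C := fun w k => separable w && last_split b w k));
  first last.
- by move=> w k k' /andP[_ split_k] /andP[_]; apply: last_split_uniq.
- move=> w k /andP[-> /and4P[k_gt0 lt_kw split_k _]].
  by apply/decomposableP; exists k; rewrite ?k_gt0.
- move=> w w_in /andP[sep_w /last_splitP[k split_k]]; exists k; last by rewrite sep_w.
  by case/and4P: split_k => _; rewrite (size_perm_word w_in) ltnS => /ltnW.
apply: eq_bigr => -[k /= le_kn] _; rewrite ltnS in le_kn.
pose Q w := [&& 0 < k, k < size w, separable w & ~~ decomposable b (drop k w)]%N.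
rewrite (eq_bigl (fun w => splits b w k && Q w)) => [|w]; last first.
  by rewrite /last_split /Q; case: (separable w); case: (splits b w k); rewrite /= ?andbF.
rewrite big_splits //; apply: big_nested_cond => a c a_in c_in.
have lt_kn : (k < n)%N = (0 < n - k)%N by rewrite subn_gt0.
rewrite /Q (decomposable_drop_dsum c a_in).
rewrite (size_perm_word (dsum_perm_words a_in c_in b)) subnKC // lt_kn.
case: (decomposable b c); rewrite /= ?andbF ?andbT //.
exact: separable_dsum_perm_words.
Qed.

Lemma big_decomposable_first b n :
  \sum_(w <- perm_words n | separable w && decomposable b w) F w
  = \sum_(k < n.+1) \sum_(a <- perm_words k | separable a && ~~ decomposable b a)
      \sum_(c <- perm_words (n - k) | separable c) F (dsum b a c).
Proof.
rewrite (big_unique_index _ (n := n.+1) (C := fun w k => separable w && first_split b w k));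
  first last.
- by move=> w k k' /andP[_ split_k] /andP[_]; apply: first_split_uniq.
- move=> w k /andP[-> /and4P[k_gt0 lt_kw split_k _]].
  by apply/decomposableP; exists k; rewrite ?k_gt0.
- move=> w w_in /andP[sep_w /first_splitP[k split_k]]; exists k; last by rewrite sep_w.
  by case/and4P: split_k => _; rewrite (size_perm_word w_in) ltnS => /ltnW.
apply: eq_bigr => -[k /= le_kn] _; rewrite ltnS in le_kn.
pose Q w := [&& 0 < k, k < size w, separable w & ~~ decomposable b (take k w)]%N.
rewrite (eq_bigl (fun w => splits b w k && Q w)) => [|w]; last first.
  by rewrite /first_split /Q; case: (separable w); case: (splits b w k); rewrite /= ?andbF.
rewrite big_splits //; apply: big_nested_cond => a c a_in c_in.
have lt_kn : (k < n)%N = (0 < n - k)%N by rewrite subn_gt0.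
rewrite /Q (decomposable_take_dsum a_in c_in).
rewrite (size_perm_word (dsum_perm_words a_in c_in b)) subnKC // lt_kn.
case: (decomposable b a); rewrite /= ?andbF ?andbT //.
exact: separable_dsum_perm_words.
Qed.

End DecomposableSums.

Lemma big_indecomposable (R : nmodType) n (F : seq nat -> R) :
  \sum_(w <- perm_words n |
          [&& separable w, ~~ decomposable true w & ~~ decomposable false w]) F w
  = F [:: 0%N] *+ (n == 1)%N.
Proof.
have [-> | n_neq1] := eqVneq n 1%N.
  by rewrite perm_words1 big_cons big_nil separable1 addr0.
rewrite big1_seq // => w /andP[/and3P[sep_w indec_sum indec_skew] w_in].
have size_w := size_perm_word w_in.
have lt1_w : (1 < size w)%N by move: (separable_gt0 sep_w); rewrite size_w; lia.
have [[] dec_w] :=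
  pattern_free_decomposable (perm_word_uniq w_in) lt1_w (separable_pattern_free sep_w).
  by rewrite dec_w in indec_sum.
by rewrite dec_w in indec_skew.
Qed.

Section Coefficients.
Variable R : comPzRingType.
Implicit Types p q x y u v : R.

Lemma ScoefE n p q x y u v :
  Scoef n p q x y u v = \sum_(w <- perm_words n | separable w) weight p q x y u v w.
Proof. exact: big_perm_words. Qed.

Lemma IcoefE n p q x y u v :
  Icoef n p q x y u v
  = \sum_(w <- perm_words n | separable w && ~~ decomposable true w) weight p q x y u v w.
Proof.
rewrite /Icoef (big_perm_words _ (fun w => separable w && irreducible w)).
apply: eq_bigl => w.
by case sep_w: (separable w); rewrite // irreducibleE ?separable_gt0.
Qed.

Lemma separable_perm_word_gt0 k a : a \in perm_words k -> separable a -> (0 < k)%N.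
Proof. by move=> /size_perm_word <- /separable_gt0. Qed.

Lemma big_sum_decomposable n p q x y u v :
  \sum_(w <- perm_words n | separable w && decomposable true w) weight p q x y u v w
  = p * \sum_(k < n.+1) Scoef k p q x 1 u v * Icoef (n - k) p q x y 1 v.
Proof.
rewrite big_decomposable_last mulr_sumr; apply: eq_bigr => k _.
rewrite ScoefE IcoefE big_distrlr mulr_sumr big_seq_cond [RHS]big_seq_cond.
apply: eq_bigr => a /andP[a_in sep_a]; rewrite mulr_sumr big_seq_cond [RHS]big_seq_cond.
apply: eq_bigr => c /andP[c_in /andP[sep_c _]].
have [k_gt0 l_gt0] := (separable_perm_word_gt0 a_in sep_a, separable_perm_word_gt0 c_in sep_c).
by rewrite (weight_dsum_sum a_in c_in k_gt0 l_gt0) /= mulrA.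
Qed.

Lemma big_skew_decomposable n p q x y u v :
  \sum_(w <- perm_words n | separable w && decomposable false w) weight p q x y u v w
  = q * \sum_(k < n.+1)
          (\sum_(a <- perm_words k | separable a && ~~ decomposable false a)
             weight p q x y u 1 a) * Scoef (n - k) p q 1 y u v.
Proof.
rewrite big_decomposable_first mulr_sumr; apply: eq_bigr => k _.
rewrite ScoefE big_distrlr mulr_sumr big_seq_cond [RHS]big_seq_cond.
apply: eq_bigr => a /andP[a_in /andP[sep_a _]]; rewrite mulr_sumr big_seq_cond [RHS]big_seq_cond.
apply: eq_bigr => c /andP[c_in sep_c].
have [k_gt0 l_gt0] := (separable_perm_word_gt0 a_in sep_a, separable_perm_word_gt0 c_in sep_c).
by rewrite (weight_dsum_skew a_in c_in k_gt0 l_gt0) /= mulrA.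
Qed.

Lemma weight1 p q x y u v : weight p q x y u v [:: 0%N] = x * y * u * v.
Proof. by rewrite weightE /= !expr0 !expr1 !mul1r. Qed.

Lemma big_skew_indecomposable k p q x y u :
  \sum_(a <- perm_words k | separable a && ~~ decomposable false a) weight p q x y u 1 a
  = Scoef k p q x y u 1 - Icoef k p q x y u 1 + (k == 1)%:R * (x * y * u).
Proof.
have -> : Scoef k p q x y u 1 - Icoef k p q x y u 1
    = \sum_(a <- perm_words k | separable a && decomposable true a) weight p q x y u 1 a.
  by rewrite ScoefE IcoefE (bigID (decomposable true) (separable)) /= addrK.
rewrite -[x * y * u]mulr1 -(weight1 p q) mulr_natl -big_indecomposable.
rewrite (bigID (decomposable true)) /=; congr (_ + _); apply: eq_bigl => a.
  by case: (boolP (decomposable true a)) => [/decomposable_sum_skew -> | _]; rewrite ?andbT ?andbF.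
by rewrite -andbA [~~ _ && ~~ _]andbC.
Qed.

Lemma Icoef_decomposition n p q x y u v :
  Icoef n p q x y u v
  = (n == 1%N)%:R * (x * y * u * v)
    + q * \sum_(k < n.+1)
            (Scoef k p q x y u 1 - Icoef k p q x y u 1
             + (nat_of_ord k == 1%N)%:R * (x * y * u)) * Scoef (n - k) p q 1 y u v.
Proof.
under eq_bigr do rewrite -big_skew_indecomposable.
rewrite -big_skew_decomposable IcoefE (bigID (decomposable false)) /= addrC.
rewrite mulr_natl -(weight1 p q) -big_indecomposable; congr (_ + _); apply: eq_bigl => w.
  by rewrite andbA.
case: (boolP (decomposable false w)) => [dec_w | _]; rewrite ?andbT ?andbF //.
by rewrite (contraL (@decomposable_sum_skew w) dec_w) andbT.
Qed.

End Coefficients.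

Unset Implicit Arguments.
Theorem theorem3 (R : comPzRingType) (p q x y u v : R) (n : nat) :
  Scoef n p q x y u v =
    (n == 1%N)%:R * (x * y * u * v)
    + p * (\sum_(k < n.+1) Scoef k p q x 1 u v * Icoef (n - k) p q x y 1 v)
    + q * (\sum_(k < n.+1)
             (Scoef k p q x y u 1 - Icoef k p q x y u 1 + (nat_of_ord k == 1%N)%:R * (x * y * u))
             * Scoef (n - k) p q 1 y u v)
  /\
  Icoef n p q x y u v =
    (n == 1%N)%:R * (x * y * u * v)
    + q * (\sum_(k < n.+1)
             (Scoef k p q x y u 1 - Icoef k p q x y u 1 + (nat_of_ord k == 1%N)%:R * (x * y * u))
             * Scoef (n - k) p q 1 y u v).
Proof.
have I_eq := Icoef_decomposition n p q x y u v.
split; last exact: I_eq.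
rewrite ScoefE (bigID (decomposable true)) /= big_sum_decomposable -IcoefE I_eq.
by rewrite addrCA addrA.
Qed.
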